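(* Let $q\ge2$ and $L\ge2$ be integers, let $\mathcal{C}\subseteq[q]^n$ be a code, and suppose the matrix $\varphi(\mathcal{C})/\sqrt{(q-1)n}$ satisfies RIP-2 of order $L$ with constant $1/2$. Then for every set of $L$ distinct codewords $c_1,\dots,c_L\in\mathcal{C}$, the average pairwise relative distance $\binom{L}{2}^{-1}\sum_{1\le i<j\le L}\delta(c_i,c_j)$ is at least $\big(1-\frac1q\big)\big(1-\frac{1}{2(L-1)}\big)$.
   Context: $[q]=\{0,1,\dots,q-1\}$; $\delta(x,y)$ is the fraction of coordinates where $x,y\in[q]^n$ differ. Simplex encoding: for $x\in[q]$, $\varphi(x)\in\mathbb{C}^{q-1}$ has coordinates $\varphi(x)(\alpha)=\omega^{x\alpha}$ for $\alpha\in\{1,\dots,q-1\}$, $\omega=e^{2\pi\mathbf{i}/q}$; for $x\in[q]^n$, $\varphi(x)\in\mathbb{C}^{n(q-1)}$ is the concatenation of $\varphi(x_1),\dots,\varphi(x_n)$. For a code $\mathcal{C}\subseteq[q]^n$, $\varphi(\mathcal{C})$ is the $(q-1)n\times|\mathcal{C}|$ complex matrix whose columns are indexed by $c\in\mathcal{C}$, the column for $c$ being $\varphi(c)$. A matrix $M\in\mathbb{C}^{m\times N}$ satisfies RIP-2 of order $k$ with constant $\delta$ if for every $x\in\mathbb{C}^N$ with at most $k$ nonzero entries, $(1-\delta)\|x\|_2^2\le\|Mx\|_2^2\le(1+\delta)\|x\|_2^2$ (Euclidean norms). *)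

From HB Require Import structures.
From mathcomp Require Import all_boot all_order all_algebra.
From mathcomp Require Import reals trigo.
From mathcomp Require Export complex.
Set Implicit Arguments. Unset Strict Implicit. Unset Printing Implicit Defensive.
Import Order.TTheory GRing.Theory Num.Theory.
Local Open Scope ring_scope.
Local Open Scope complex_scope.

Definition word (q n : nat) := {ffun 'I_n -> 'I_q}.

Definition reldist (R : realType) (q n : nat) (x y : word q n) : R :=
  #|[set i | x i != y i]|%:R / n%:R.

Definition omega (R : realType) (q : nat) : R[i] :=
  (cos (2 * pi / q%:R))%:C + 'i * (sin (2 * pi / q%:R))%:C.

(* simplex encoding of a word: the concatenation of phi(x_1),...,phi(x_n),
   phi(x_t)(alpha) = omega^(x_t * alpha), alpha = 1..q-1 (stored at a = alpha-1).
   mxvec is row-major, so entry (t, a) sits at position t*(q-1)+a. *)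
Definition phi_word (R : realType) (q n : nat) (x : word q n) : 'rV[R[i]]_(n * q.-1) :=
  mxvec (\matrix_(t < n, a < q.-1) omega R q ^+ ((x t : nat) * a.+1)).

Definition phi_code (R : realType) (q n : nat) (C : {set word q n})
  : 'M[R[i]]_(n * q.-1, #|C|) :=
  \matrix_(r, j) (phi_word R (enum_val j)) ord0 r.

Definition sqnorm (R : realType) (m : nat) (v : 'cV[R[i]]_m) : R[i] :=
  \sum_(r < m) `|v r ord0| ^+ 2.

Definition RIP2 (R : realType) (m N : nat) (M : 'M[R[i]]_(m, N)) (k : nat) (delta : R) :=
  forall x : 'cV[R[i]]_N, (#|[set j | x j ord0 != 0%R]| <= k)%N ->
    (1 - delta%:C) * sqnorm x <= sqnorm (M *m x) <= (1 + delta%:C) * sqnorm x.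

(* Test the RIP upper bound on the 0/1 indicator x of the L codewords.  Since
   omega is a primitive q-th root of unity, sum_{a=1}^{q-1} omega^((s-t)a) is
   q-1 if s = t and -1 otherwise, so <phi(u), phi(v)> = (q-1)n - q d_H(u,v).
   Expanding |phi(C) x|^2 = sum_{i,j} <phi(c_i), phi(c_j)> gives
   L^2 (q-1)n - 2q sum_{i<j} d_H(c_i,c_j), while RIP bounds it by
   (3/2)(q-1)n |x|^2 = (3/2)(q-1)nL; rearranging yields the average-distance bound. *)

From HB Require Import structures.
From mathcomp Require Import all_boot all_order all_algebra.
From mathcomp Require Import reals trigo complex.
From mathcomp Require Import ring lra.
Set Implicit Arguments.
Unset Strict Implicit.
Unset Printing Implicit Defensive.

Import Order.TTheory GRing.Theory Num.Theory.
Local Open Scope ring_scope.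
Local Open Scope complex_scope.

Lemma sum_nontrivial_root_powers (K : idomainType) (z : K) m :
  z ^+ m.+1 = 1 -> z != 1 -> \sum_(a < m) z ^+ a.+1 = -1.
Proof.
move=> zm1 z_neq1; have := subrX1 z m.+1; rewrite zm1 subrr => /esym/eqP.
rewrite mulf_eq0 subr_eq0 (negbTE z_neq1) /= big_ord_recl expr0 => /eqP sum0.
by apply/eqP; rewrite -(subr_eq0 _ (-1)) opprK addrC sum0.
Qed.

Lemma conjC_unity_root (C : numClosedFieldType) (z : C) n :
  (0 < n)%N -> z ^+ n = 1 -> (z^*)%R = z^-1.
Proof.
move=> n_gt0 zn1; have /eqP norm_z : `|z| == 1.
  by rewrite -(pexpr_eq1 n_gt0) // -normrX zn1 normr1.
by rewrite invC_norm norm_z expr1n invr1 mul1r.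
Qed.

Section Omega.
Variables (R : realType) (q : nat).
Hypothesis q_ge2 : (2 <= q)%N.
Local Notation w := (omega R q).

Let q_gt0 : (0 < q)%N. Proof. exact: leq_trans q_ge2. Qed.
Let qR_neq0 : q%:R != 0 :> R. Proof. by rewrite pnatr_eq0 -lt0n. Qed.

Let theta : R := 2 * pi / q%:R.

Lemma omegaX k : w ^+ k = (cos (k%:R * theta))%:C + 'i * (sin (k%:R * theta))%:C.
Proof.
elim: k => [|k IHk]; first by rewrite mul0r cos0 sin0 mulr0 addr0.
rewrite exprSr IHk /omega -/theta -natr1 (mulrDl _ 1 theta) mul1r cosD sinD.
by simpc; congr (_ +i* _); ring.
Qed.

Lemma omega_prim_root : q.-primitive_root w.
Proof.
rewrite /primitive_root_of_unity q_gt0; apply/forallP => -[k /= k_lt_q].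
rewrite unity_rootE omegaX.
have [-> | k_neq_q] := eqVneq k.+1 q.
  have -> : q%:R * theta = pi *+ 2 by rewrite /theta -mulr_natr; field.
  by rewrite cos2pi sin2pi mulr0 addr0 eqxx.
rewrite eqbF_neg; apply/negP => /eqP /(congr1 (@complex.Re R)) /= cos_eq1.
pose y : R := k.+1%:R * pi / q%:R.
have sin_y_gt0 : 0 < sin y.
  apply: sin_gt0_pi; rewrite divr_gt0 ?mulr_gt0 ?pi_gt0 ?ltr0n //=.
  rewrite ltr_pdivrMr ?ltr0n // mulrC ltr_pM2l ?pi_gt0 // ltr_nat.
  by rewrite ltn_neqAle k_neq_q.
have theta_y : k.+1%:R * theta = y *+ 2 by rewrite /y /theta -mulr_natr; field.
rewrite theta_y cos_mulr2n in cos_eq1.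
have /eqP : sin y ^+ 2 = 0 by rewrite sin2cos2; lra.
by rewrite expf_eq0 /= (gt_eqF sin_y_gt0).
Qed.

Lemma simplex_inner (x y : 'I_q) :
  \sum_(a < q.-1) w ^+ (x * a.+1) * (w ^+ (y * a.+1))^*
  = if x == y then q.-1%:R else -1.
Proof.
have w_q := prim_expr_order omega_prim_root.
have w_neq0 : w != 0 by rewrite (prim_root_eq0 omega_prim_root) -lt0n.
set z := w ^+ x / w ^+ y.
have termE a : w ^+ (x * a.+1) * (w ^+ (y * a.+1))^* = z ^+ a.+1.
  rewrite (conjC_unity_root q_gt0) ?exprM; last first.
    by rewrite -!exprM mulnC exprM w_q expr1n.
  by rewrite exprMn exprVn.
under eq_bigr do rewrite termE.
have z_eq1 : (z == 1) = (x == y).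
  rewrite -[RHS]/(x == y :> nat) -(modn_small (ltn_ord x)) -(modn_small (ltn_ord y)).
  rewrite -(eq_prim_root_expr omega_prim_root) /z.
  apply/eqP/eqP => [/divr1_eq // | ->].
  by rewrite divff // expf_neq0.
have [x_eq_y | x_neq_y] := eqVneq x y.
  have /eqP -> : z == 1 by rewrite z_eq1 x_eq_y.
  by rewrite (eq_bigr (fun=> 1)) ?sumr_const ?card_ord // => a _; rewrite expr1n.
apply: sum_nontrivial_root_powers; last by rewrite z_eq1.
by rewrite prednK // exprMn exprVn -!exprM !(mulnC _ q) !exprM w_q !expr1n invr1 mulr1.
Qed.

End Omega.

Lemma sum_mxvec_index (V : nmodType) m1 m2 (F : 'I_(m1 * m2) -> V) :
  \sum_k F k = \sum_i \sum_j F (mxvec_index i j).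
Proof.
rewrite pair_big (reindex (fun p : 'I_m1 * 'I_m2 => mxvec_index p.1 p.2)) //=.
have [g mxvec_indexK indexK] := @curry_mxvec_bij m1 m2.
exists g => [[i j] _ | k _]; first exact: (mxvec_indexK (i, j)).
by have := indexK k isT; case: (g k).
Qed.

Definition hamming q n (x y : word q n) : nat := #|[set t | x t != y t]|.

Lemma hammingC q n (x y : word q n) : hamming x y = hamming y x.
Proof. by apply: eq_card => t; rewrite !inE eq_sym. Qed.

Lemma hammingxx q n (x : word q n) : hamming x x = 0%N.
Proof. by apply/eqP; rewrite cards_eq0; apply/eqP/setP => t; rewrite !inE eqxx. Qed.

Lemma phi_word_inner (R : realType) q n (x y : word q n) : (2 <= q)%N ->
  \sum_(r < n * q.-1) phi_word R x 0 r * (phi_word R y 0 r)^*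
  = (n * q.-1)%:R - q%:R * (hamming x y)%:R.
Proof.
move=> q_ge2; rewrite sum_mxvec_index.
under eq_bigr do under eq_bigr do rewrite !mxvecE !mxE.
under eq_bigr do rewrite simplex_inner //.
transitivity (\sum_t (q.-1%:R - q%:R * (x t != y t)%:R : R[i])).
  apply: eq_bigr => t _; case: eqP => _ /=; first by rewrite mulr0 subr0.
  by rewrite -subn1 natrB ?(leq_trans _ q_ge2) //; ring.
rewrite sumrB sumr_const card_ord -mulr_sumr -natr_sum.
congr (_ - _ * _%:R); first by rewrite mulnC natrM mulr_natr.
rewrite /hamming -sum1_card [RHS]big_mkcond /=.
by apply: eq_bigr => t _; rewrite inE; case: (_ != _).
Qed.

Lemma sum_pairs_sym (V : nmodType) m (f : 'I_m -> 'I_m -> V) :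
  (forall i j, f i j = f j i) -> (forall i, f i i = 0) ->
  \sum_(i < m) \sum_(j < m) f i j = (\sum_(i < m) \sum_(j < m | (i < j)%N) f i j) *+ 2.
Proof.
move=> f_sym f_diag.
have split_row (i : 'I_m) :
    \sum_(j < m) f i j = \sum_(j < m | (i < j)%N) f i j + \sum_(j < m | (j < i)%N) f i j.
  rewrite (bigID (fun j : 'I_m => (i < j)%N)) /=; congr (_ + _).
  rewrite (bigID (fun j : 'I_m => (j < i)%N)) /= [X in _ + X]big1 ?addr0.
    by apply: eq_bigl => j; rewrite -leqNgt; case: ltngtP.
  move=> j; rewrite -!leqNgt => /andP[j_le_i i_le_j].
  by rewrite (_ : j = i) ?f_diag //; apply/val_inj/anti_leq; rewrite j_le_i.
under eq_bigr do rewrite split_row.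
rewrite big_split /= mulr2n; congr (_ + _).
rewrite (exchange_big_dep xpredT) //=.
by apply: eq_bigr => i _; apply: eq_bigr => j _; rewrite f_sym.
Qed.

Lemma sum_imset_sym (V : nmodType) (T : finType) m (c : 'I_m -> T) (f : T -> T -> V) :
  injective c -> (forall x y, f x y = f y x) -> (forall x, f x x = 0) ->
  \sum_(x in c @: [set: 'I_m]) \sum_(y in c @: [set: 'I_m]) f x y
  = (\sum_(i < m) \sum_(j < m | (i < j)%N) f (c i) (c j)) *+ 2.
Proof.
move=> c_inj f_sym f_diag.
have c_injT : {in [set: 'I_m] &, injective c} by move=> i j _ _ /c_inj.
rewrite (big_imset _ c_injT); under eq_bigr do rewrite (big_imset _ c_injT).
under eq_bigl do rewrite in_setT; under eq_bigr do under eq_bigl do rewrite in_setT.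
by apply: sum_pairs_sym => [i j | i]; [exact: f_sym | exact: f_diag].
Qed.

Lemma sqnorm_scale (R : realType) m (a : R[i]) (v : 'cV[R[i]]_m) :
  sqnorm (a *: v) = `|a| ^+ 2 * sqnorm v.
Proof.
by rewrite /sqnorm mulr_sumr; apply: eq_bigr => k _; rewrite mxE normrM exprMn.
Qed.

Lemma sqnorm_sum (R : realType) m (I : finType) (P : pred I) (u : I -> 'I_m -> R[i]) :
  sqnorm (\col_k \sum_(i | P i) u i k)
  = \sum_(i | P i) \sum_(j | P j) \sum_k u i k * (u j k)^*.
Proof.
rewrite /sqnorm (eq_bigr (fun k => \sum_(i | P i) \sum_(j | P j) u i k * (u j k)^*)).
  by rewrite exchange_big; apply: eq_bigr => i _; rewrite exchange_big.
move=> k _; rewrite mxE normCK rmorph_sum mulr_suml.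
by apply: eq_bigr => i _; rewrite mulr_sumr.
Qed.

Lemma RIP2_scaled_sqnorm_le (R : realType) m N (M : 'M[R[i]]_(m, N)) k d a
    (x : 'cV[R[i]]_N) :
  (0 < a)%N -> RIP2 ((sqrtC (a%:R : R[i]))^-1 *: M) k d ->
  (#|[set j | x j ord0 != 0%R]| <= k)%N ->
  sqnorm (M *m x) <= a%:R * ((1 + d%:C) * sqnorm x).
Proof.
move=> a_gt0 rip x_sparse; have /andP[_] := rip x x_sparse.
rewrite -scalemxAl sqnorm_scale normfV exprVn -normrX sqrtCK normr_nat.
by rewrite ler_pdivrMl ?ltr0n.
Qed.

Section Indicator.
Variables (R : realType) (q n : nat) (C S : {set word q n}).
Hypothesis sSC : S \subset C.

Definition indicator : 'cV[R[i]]_#|C| := \col_j (enum_val j \in S)%:R.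

Lemma sum_indicator (F : word q n -> R[i]) :
  \sum_j indicator j 0 * F (enum_val j) = \sum_(x in S) F x.
Proof.
transitivity (\sum_(x in C | x \in S) F x); last first.
  by apply: eq_bigl => x; rewrite andbC; case: (boolP (x \in S)) => // /(subsetP sSC) ->.
rewrite big_enum_val_cond [RHS]big_mkcond /=; apply: eq_bigr => j _.
by rewrite mxE; case: (_ \in S); rewrite (mul1r, mul0r).
Qed.

Lemma leq_card_support_indicator : (#|[set j | indicator j ord0 != 0%R]| <= #|S|)%N.
Proof.
rewrite -(card_imset _ enum_val_inj); apply: subset_leq_card.
by apply/subsetP => _ /imsetP[j + ->]; rewrite !inE mxE pnatr_eq0 eqb0 negbK.
Qed.

Lemma sqnorm_indicator : sqnorm indicator = #|S|%:R.
Proof.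
rewrite -[RHS]mulr1n -sumr_const -sum_indicator; apply: eq_bigr => j _.
by rewrite mxE mulr1; case: (_ \in S); rewrite ?normr1 ?normr0 ?expr1n ?expr0n.
Qed.

Lemma phi_code_indicator :
  phi_code R C *m indicator = \col_r \sum_(x in S) phi_word R x 0 r.
Proof.
apply/matrixP => r i; rewrite ord1 !mxE -sum_indicator.
by apply: eq_bigr => j _; rewrite !mxE mulrC.
Qed.

Lemma sqnorm_phi_code_indicator : (2 <= q)%N ->
  sqnorm (phi_code R C *m indicator)
  = (#|S| * #|S| * (n * q.-1))%:R - q%:R * (\sum_(x in S) \sum_(y in S) hamming x y)%:R.
Proof.
move=> q_ge2; rewrite phi_code_indicator sqnorm_sum.
rewrite (eq_bigr (fun x => \sum_(y in S) ((n * q.-1)%:R - q%:R * (hamming x y)%:R))); last first.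
  by move=> x _; apply: eq_bigr => y _; apply: phi_word_inner.
under eq_bigr do rewrite sumrB sumr_const -mulr_sumr -natr_sum.
rewrite sumrB sumr_const -mulr_sumr -natr_sum -mulrnA.
by rewrite -[_ *+ (#|S| * #|S|)]mulr_natr mulrC !natrM.
Qed.

End Indicator.

Lemma natr_bin2 (F : numFieldType) m : ('C(m, 2))%:R = m%:R * (m%:R - 1) / 2 :> F.
Proof.
case: m => [|m]; first by rewrite bin0n !mul0r.
have := mul_bin_diag m.+1 1; rewrite bin1 /= => /(congr1 (fun k => k%:R : F)).
rewrite !natrM => bin2E.
by rewrite -natr1 addrK natr1 bin2E (mulrC 2%:R) mulfK ?pnatr_eq0.
Qed.

Lemma pair_average_bound (F : realFieldType) (q L n D : F) :
  2 <= q -> 2 <= L -> 0 < n -> (q - 1) * n * L * (2 * L - 3) <= 4 * q * D ->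
  (1 - 1 / q) * (1 - 1 / (2 * (L - 1))) <= D / n / (L * (L - 1) / 2).
Proof.
move=> q_ge2 L_ge2 n_gt0 energy.
have den_gt0 : 0 < 2 * q * n * L * (L - 1) by rewrite !mulr_gt0 //; lra.
have -> : (1 - 1 / q) * (1 - 1 / (2 * (L - 1)))
    = (q - 1) * n * L * (2 * L - 3) / (2 * q * n * L * (L - 1)).
  by field; apply/and4P; split; apply: lt0r_neq0; lra.
have -> : D / n / (L * (L - 1) / 2) = 4 * q * D / (2 * q * n * L * (L - 1)).
  by field; apply/and4P; split; apply: lt0r_neq0; lra.
by rewrite ler_pM2r ?invr_gt0 //; lra.
Qed.

Theorem lemma3p4 (R : realType) (q L n : nat) (C : {set word q n}) :
  (2 <= q)%N -> (2 <= L)%N ->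
  RIP2 ((sqrtC ((q.-1 * n)%:R : R[i]))^-1 *: phi_code R C) L (1 / 2) ->
  forall c : 'I_L -> word q n, injective c -> (forall i, c i \in C) ->
    (1 - 1 / q%:R) * (1 - 1 / (2 * (L.-1)%:R))
      <= (\sum_(i < L) \sum_(j < L | (i < j)%N) reldist R (c i) (c j)) / ('C(L, 2))%:R.
Proof.
move=> q_ge2 L_ge2 rip c c_inj cC.
have n_gt0 : (0 < n)%N.
  rewrite lt0n; apply: contraTneq L_ge2 => n0; rewrite -ltnNge ltnS.
  by have := leq_card c c_inj; rewrite card_ffun !card_ord n0.
pose S := c @: [set: 'I_L].
have sSC : S \subset C by apply/subsetP => _ /imsetP[i _ ->].
have cardS : #|S| = L by rewrite card_imset // cardsT card_ord.
pose D := (\sum_(i < L) \sum_(j < L | i < j) hamming (c i) (c j))%N.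
have sum_hamming : \sum_(x in S) \sum_(y in S) hamming x y = D *+ 2.
  exact: sum_imset_sym c_inj (@hammingC q n) (@hammingxx q n).
have a_gt0 : (0 < q.-1 * n)%N by rewrite muln_gt0 ltn_predRL q_ge2.
have sparse : (#|[set j | indicator R C S j ord0 != 0%R]| <= L)%N.
  by rewrite -cardS leq_card_support_indicator.
have := RIP2_scaled_sqnorm_le a_gt0 rip sparse.
rewrite (sqnorm_phi_code_indicator R sSC q_ge2) (sqnorm_indicator R sSC).
rewrite cardS sum_hamming => energy_le.
have : (L * L * (n * q.-1))%:R - q%:R * (D *+ 2)%:R
       <= (q.-1 * n)%:R * ((1 + 1 / 2) * L%:R) :> R.
  rewrite -lecR; move: energy_le.
  by rewrite !(rmorphB, rmorphM, rmorphD, rmorph_nat, rmorph1, fmorphV).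
rewrite mulr2n !natrD !natrM -subn1 natrB ?(ltnW q_ge2) // => energy_R.
have -> : \sum_(i < L) \sum_(j < L | (i < j)%N) reldist R (c i) (c j) = D%:R / n%:R.
  by rewrite /D natr_sum mulr_suml; apply: eq_bigr => i _; rewrite natr_sum mulr_suml.
rewrite natr_bin2 -subn1 natrB ?(ltnW L_ge2) //.
apply: pair_average_bound; rewrite ?ler_nat ?ltr0n //; lra.
Qed.
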